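(* Let $J_1,J_2\subseteq I$ be ideals in a Noetherian ring $R$ such that both pairs $J_1\subseteq I$ and $J_2\subseteq I$ are Aluffi torsion-free. Then $J_1+J_2\subseteq I$ is Aluffi torsion-free if and only if the pair of image ideals $\overline{J_1}\subseteq\overline I$ in $\overline R=R/J_2$ is Aluffi torsion-free.
   Context: A pair of ideals $J\subseteq I$ in a ring $R$ is called Aluffi torsion-free if $J\cap I^n=JI^{n-1}$ for all $n\ge1$ (with $I^0=R$). *)

From HB Require Import structures.
From mathcomp Require Import all_boot all_order all_algebra.
Set Implicit Arguments. Unset Strict Implicit. Unset Printing Implicit Defensive.
Import GRing.Theory.
Local Open Scope ring_scope.

Section Ideals.
Variable R : comPzRingType.

Definition is_ideal (I : R -> Prop) : Prop :=
  [/\ I 0, (forall x y, I x -> I y -> I (x + y)) & (forall r x, I x -> I (r * x))].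

Definition subset_ideal (I J : R -> Prop) : Prop := forall x, I x -> J x.
Definition eq_ideal (I J : R -> Prop) : Prop := forall x, I x <-> J x.

Definition ideal_cap (I J : R -> Prop) : R -> Prop := fun x => I x /\ J x.

Definition ideal_add (I J : R -> Prop) : R -> Prop :=
  fun x => exists a b, [/\ I a, J b & x = a + b].

Definition ideal_mul (I J : R -> Prop) : R -> Prop :=
  fun x => exists n (a b : 'I_n -> R),
    [/\ forall i, I (a i), forall i, J (b i) & x = \sum_(i < n) a i * b i].

Fixpoint ideal_pow (I : R -> Prop) (n : nat) : R -> Prop :=
  match n with
  | 0%N => fun _ => True
  | n'.+1 => ideal_mul (ideal_pow I n') I
  end.

Definition noetherian : Prop :=
  forall C : nat -> R -> Prop,
    (forall k, is_ideal (C k)) ->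
    (forall k, subset_ideal (C k) (C k.+1)) ->
    exists N, forall k, (N <= k)%N -> eq_ideal (C k) (C N).

Definition aluffi_torsion_free (J I : R -> Prop) : Prop :=
  forall n : nat, (1 <= n)%N ->
    eq_ideal (ideal_cap J (ideal_pow I n)) (ideal_mul J (ideal_pow I n.-1)).

End Ideals.

Definition image_set (R S : Type) (f : R -> S) (I : R -> Prop) : S -> Prop :=
  fun y => exists x, I x /\ y = f x.

(* Write J = J1 + J2 and bars for images in R/J2, so that the image of J is
   that of J1 and the image of I^n is (bar I)^n.  If J is torsion-free, an
   element of bar J1 ∩ (bar I)^(n+1) lifts to J ∩ I^(n+1) = J I^n, whose image
   lies in bar J1 (bar I)^n.  Conversely, for x in J ∩ I^(n+1), torsion-freeness
   of bar J1 gives c in J1 I^n with x - c in J2 ∩ I^(n+1) = J2 I^n, hence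
   x = c + (x - c) lies in J1 I^n + J2 I^n ⊆ J I^n. *)
From HB Require Import structures.
From mathcomp Require Import all_boot all_order all_algebra.
Import GRing.Theory.
Local Open Scope ring_scope.

Set Implicit Arguments.

Section IdealArithmetic.
Variable R : comPzRingType.
Implicit Types A B C I J : R -> Prop.

Lemma idealB A x y : is_ideal A -> A x -> A y -> A (x - y).
Proof. by case=> _ AD AM Ax Ay; apply: AD => //; rewrite -mulN1r; apply: AM. Qed.

Lemma ideal_mul_is_ideal A B : is_ideal A -> is_ideal (ideal_mul A B).
Proof.
case=> _ _ AM; split.
- by exists 0%N, (fun _ => 0), (fun _ => 0); split; [case|case|rewrite big_ord0].
- move=> _ _ [n [a [b [Ha Hb ->]]]] [m [a' [b' [Ha' Hb' ->]]]].
  pose glue (f : 'I_n -> R) (g : 'I_m -> R) i :=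
    match split i with inl j => f j | inr k => g k end.
  exists (n + m)%N, (glue a a'), (glue b b'); split.
  + by move=> i; rewrite /glue; case: (split i).
  + by move=> i; rewrite /glue; case: (split i).
  + rewrite big_split_ord /glue; congr (_ + _); apply: eq_bigr => i _.
    * by rewrite (unsplitK (inl i)).
    * by rewrite (unsplitK (inr i)).
- move=> r _ [n [a [b [Ha Hb ->]]]].
  exists n, (fun i => r * a i), b; split => // [i|]; first exact: AM.
  by rewrite mulr_sumr; apply: eq_bigr => i _; rewrite mulrA.
Qed.

Lemma ideal_mul_mem A B x y : A x -> B y -> ideal_mul A B (x * y).
Proof.
by move=> Ax By; exists 1%N, (fun _ => x), (fun _ => y); rewrite big_ord1.
Qed.

Lemma ideal_mul_sub A B C : is_ideal C ->
  (forall x y, A x -> B y -> C (x * y)) -> subset_ideal (ideal_mul A B) C.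
Proof.
case=> C0 CD _ AB_C _ [n [a [b [Ha Hb ->]]]].
by apply: (big_ind C) => // i _; apply: AB_C.
Qed.

Lemma ideal_mul_mono A A' B B' : subset_ideal A A' -> subset_ideal B B' ->
  subset_ideal (ideal_mul A B) (ideal_mul A' B').
Proof.
move=> AA' BB' _ [n [a [b [Ha Hb ->]]]].
by exists n, a, b; split => // i; [apply: AA' | apply: BB'].
Qed.

Lemma ideal_pow_is_ideal I n : is_ideal I -> is_ideal (ideal_pow I n).
Proof. by move=> HI; elim: n => [|n IHn]; [split | exact: ideal_mul_is_ideal]. Qed.

Lemma ideal_add_is_ideal A B : is_ideal A -> is_ideal B -> is_ideal (ideal_add A B).
Proof.
case=> A0 AD AM [B0 BD BM]; split.
- by exists 0, 0; rewrite addr0.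
- move=> _ _ [a [b [Aa Bb ->]]] [a' [b' [Aa' Bb' ->]]].
  by exists (a + a'), (b + b'); rewrite addrACA; split; [apply: AD | apply: BD |].
- move=> r _ [a [b [Aa Bb ->]]].
  by exists (r * a), (r * b); rewrite mulrDr; split; [apply: AM | apply: BM |].
Qed.

Lemma ideal_add_subl A B : is_ideal B -> subset_ideal A (ideal_add A B).
Proof. by case=> B0 _ _ x Ax; exists x, 0; rewrite addr0. Qed.

Lemma ideal_add_subr A B : is_ideal A -> subset_ideal B (ideal_add A B).
Proof. by case=> A0 _ _ y By; exists 0, y; rewrite add0r. Qed.

Lemma ideal_add_sub A B C : is_ideal C -> subset_ideal A C -> subset_ideal B C ->
  subset_ideal (ideal_add A B) C.
Proof. by case=> _ CD _ AsubC BsubC _ [a [b [Aa Bb ->]]]; apply: CD; [apply: AsubC | apply: BsubC]. Qed.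

Lemma ideal_mulDl_sub A B C : is_ideal A -> is_ideal B ->
  subset_ideal (ideal_add (ideal_mul A C) (ideal_mul B C)) (ideal_mul (ideal_add A B) C).
Proof.
move=> Aideal Bideal; apply: ideal_add_sub.
- exact: ideal_mul_is_ideal (ideal_add_is_ideal Aideal Bideal).
- exact: ideal_mul_mono (ideal_add_subl _ Bideal) (fun _ h => h).
- exact: ideal_mul_mono (ideal_add_subr _ Aideal) (fun _ h => h).
Qed.

Lemma ideal_mul_pow_sub_cap J I n : is_ideal J -> is_ideal I -> subset_ideal J I ->
  subset_ideal (ideal_mul J (ideal_pow I n)) (ideal_cap J (ideal_pow I n.+1)).
Proof.
move=> HJ HI JI x Jx; have [_ _ JM] := HJ; split.
- by apply: ideal_mul_sub HJ _ _ Jx => a b Ja _; rewrite mulrC; apply: JM.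
- apply: ideal_mul_sub (ideal_pow_is_ideal _ HI) _ _ Jx => a b Ja Pb.
  by rewrite mulrC; apply: ideal_mul_mem => //; apply: JI.
Qed.

Lemma aluffi_torsion_freeP J I : is_ideal J -> is_ideal I -> subset_ideal J I ->
  aluffi_torsion_free J I <->
  forall n, subset_ideal (ideal_cap J (ideal_pow I n.+1)) (ideal_mul J (ideal_pow I n)).
Proof.
move=> HJ HI JI; split=> [TF n x /(TF n.+1 isT x).1 // | TF [|n] // _ x].
by split; [apply: TF | apply: ideal_mul_pow_sub_cap].
Qed.

End IdealArithmetic.

Section SurjectiveImage.
Variables (R S : comPzRingType) (pi : {rmorphism R -> S}).
Hypothesis pi_surj : forall y : S, exists x : R, pi x = y.
Implicit Types A B I : R -> Prop.

Lemma image_is_ideal A : is_ideal A -> is_ideal (image_set pi A).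
Proof.
case=> A0 AD AM; split.
- by exists 0; rewrite rmorph0.
- move=> _ _ [x [Ax ->]] [y [Ay ->]].
  by exists (x + y); rewrite rmorphD; split => //; apply: AD.
- move=> r _ [x [Ax ->]]; have [r' <-] := pi_surj r.
  by exists (r' * x); rewrite rmorphM; split => //; apply: AM.
Qed.

Lemma image_mono A B : subset_ideal A B -> subset_ideal (image_set pi A) (image_set pi B).
Proof. by move=> AB _ [x [Ax ->]]; exists x; split => //; apply: AB. Qed.

Lemma image_mul A B : is_ideal A ->
  eq_ideal (image_set pi (ideal_mul A B)) (ideal_mul (image_set pi A) (image_set pi B)).
Proof.
move=> Aideal y; split.
- move=> [_ [[n [a [b [Ha Hb ->]]]] ->]].
  exists n, (pi \o a), (pi \o b); split => [i|i|]; [by exists (a i) | by exists (b i) |].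
  by rewrite rmorph_sum; apply: eq_bigr => i _; rewrite rmorphM.
- apply: ideal_mul_sub; first exact/image_is_ideal/ideal_mul_is_ideal.
  move=> _ _ [x [Ax ->]] [x' [Bx' ->]].
  by exists (x * x'); rewrite rmorphM; split => //; apply: ideal_mul_mem.
Qed.

Lemma image_pow I n : is_ideal I ->
  eq_ideal (image_set pi (ideal_pow I n)) (ideal_pow (image_set pi I) n).
Proof.
move=> HI; elim: n => [|n IHn] y /=.
  by split=> // _; have [x <-] := pi_surj y; exists x.
have [to_mul from_mul] := image_mul I (ideal_pow_is_ideal n HI) y.
split=> [/to_mul | Hy]; last apply: from_mul.
- by apply: ideal_mul_mono => // z /IHn.
- by apply: ideal_mul_mono Hy => // z /IHn.
Qed.

Lemma image_add_ker A B : (forall b, B b -> pi b = 0) ->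
  subset_ideal (image_set pi (ideal_add A B)) (image_set pi A).
Proof.
move=> Bker _ [_ [[a [b [Aa Bb ->]]] ->]].
by exists a; rewrite rmorphD (Bker b Bb) addr0.
Qed.

End SurjectiveImage.

Section AddKernel.
Variables (R S : comPzRingType) (pi : {rmorphism R -> S}).
Variables (I J1 J2 : R -> Prop).
Hypothesis pi_surj : forall y : S, exists x : R, pi x = y.
Hypothesis pi_ker : forall x : R, pi x = 0 <-> J2 x.
Hypotheses (HI : is_ideal I) (HJ1 : is_ideal J1) (HJ2 : is_ideal J2).
Hypotheses (J1I : subset_ideal J1 I) (J2I : subset_ideal J2 I).

Let HJ := ideal_add_is_ideal HJ1 HJ2.
Let JI : subset_ideal (ideal_add J1 J2) I := ideal_add_sub HI J1I J2I.
Let J2ker b : J2 b -> pi b = 0 := (pi_ker b).2.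

Lemma subr_mem_J2 x x' : pi x' = pi x -> J2 (x' - x).
Proof. by move=> e; apply/pi_ker; rewrite rmorphB e subrr. Qed.

Lemma torsion_free_image_of_add :
  aluffi_torsion_free (ideal_add J1 J2) I ->
  aluffi_torsion_free (image_set pi J1) (image_set pi I).
Proof.
move=> /aluffi_torsion_freeP -/(_ HJ HI JI) TF.
apply/aluffi_torsion_freeP => [|||n].
- exact: image_is_ideal.
- exact: image_is_ideal.
- exact: image_mono.
move=> _ [[x [J1x ->]] /(image_pow pi pi_surj _ HI _).2 [x' [Px' e]]].
have Jx' : ideal_add J1 J2 x'.
  by exists x, (x' - x); rewrite [x + _]addrC subrK; split => //; apply: subr_mem_J2.
have Mx' : ideal_mul
    (image_set pi (ideal_add J1 J2)) (image_set pi (ideal_pow I n)) (pi x').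
  by apply/(image_mul pi pi_surj _ HJ _); exists x'; split => //; apply: TF.
rewrite e; apply: ideal_mul_mono Mx' => [|z /(image_pow pi pi_surj n HI z).1 //].
exact: image_add_ker J2ker.
Qed.

Lemma torsion_free_add_of_image :
  aluffi_torsion_free J2 I ->
  aluffi_torsion_free (image_set pi J1) (image_set pi I) ->
  aluffi_torsion_free (ideal_add J1 J2) I.
Proof.
move=> /aluffi_torsion_freeP -/(_ HJ2 HI J2I) TF2.
move=> /aluffi_torsion_freeP -/(_ (image_is_ideal pi pi_surj HJ1)
  (image_is_ideal pi pi_surj HI) (image_mono pi J1I)) TF1bar.
apply/aluffi_torsion_freeP => // n x [Jx Px].
have J1barx : image_set pi J1 (pi x).
  by apply: image_add_ker J2ker _ _; exists x.
have Ibarx : ideal_pow (image_set pi I) n.+1 (pi x).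
  by apply/(image_pow pi pi_surj _ HI _); exists x.
have /(ideal_mul_mono (fun _ h => h) (fun y => (image_pow pi pi_surj n HI y).2))
     /(image_mul pi pi_surj _ HJ1 _).2 [c [J1c e]] := TF1bar n _ (conj J1barx Ibarx).
have J2d : J2 (x - c) by apply: subr_mem_J2.
have Pc := (ideal_mul_pow_sub_cap n HJ1 HI J1I J1c).2.
have Pd := idealB _ _ (ideal_pow_is_ideal n.+1 HI) Px Pc.
rewrite -[x](subrK c) addrC; apply: ideal_mulDl_sub => //.
by exists c, (x - c); split => //; apply: TF2.
Qed.

End AddKernel.

Theorem proposition2p5 (R : comPzRingType) (I J1 J2 : R -> Prop) :
  noetherian R ->
  is_ideal I -> is_ideal J1 -> is_ideal J2 ->
  subset_ideal J1 I -> subset_ideal J2 I ->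
  aluffi_torsion_free J1 I -> aluffi_torsion_free J2 I ->
  forall (S : comPzRingType) (pi : {rmorphism R -> S}),
    (forall y : S, exists x : R, pi x = y) ->
    (forall x : R, pi x = 0 <-> J2 x) ->
    (aluffi_torsion_free (ideal_add J1 J2) I <->
     aluffi_torsion_free (image_set pi J1) (image_set pi I)).
Proof.
move=> _ HI HJ1 HJ2 J1I J2I _ TF2 S pi pi_surj pi_ker; split.
- exact: torsion_free_image_of_add.
- exact: torsion_free_add_of_image.
Qed.
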